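(* Let $(G,u,v,\alpha,\beta)$ be a Guvab with $\beta=1$. If there exists $N\ge0$ such that $\{W_n\}_{n\ge N}$ is a constant sequence, then $\{W_n\}_{n\ge1}$ is a constant sequence.
   Context: A Guvab is a tuple $(G,u,v,\alpha,\beta)$ where $G$ is a finite, connected, simple graph, $u,v\in V(G)$, and $\alpha,\beta\in[0,1]$ with $\alpha\le\beta$. A random walk on $G$ with starting vertex $w$ and laziness $\gamma$ is the Markov chain $R_0=w$ and, for $i\ge1$, $R_i=R_{i-1}$ with probability $\gamma$ and $R_i=t$ with probability $\frac{1-\gamma}{\deg(R_{i-1})}$ for each neighbor $t$ of $R_{i-1}$. $\mu_n$ is the distribution after $n$ steps of the walk from $u$ with laziness $\alpha$, $\nu_n$ that of the walk from $v$ with laziness $\beta$, and $W_n=W(\mu_n,\nu_n)$ is the Wasserstein ($L^1$ optimal transport) distance with respect to the graph distance. *)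

From HB Require Import structures.
From mathcomp Require Import all_boot all_order all_algebra.
From mathcomp Require Import boolp classical_sets reals.
Set Implicit Arguments. Unset Strict Implicit. Unset Printing Implicit Defensive.
Import Order.TTheory GRing.Theory Num.Theory.
Local Open Scope ring_scope.
Local Open Scope classical_set_scope.

Definition simple_graph (T : finType) (e : rel T) : Prop :=
  symmetric e /\ irreflexive e.
Definition connected_graph (T : finType) (e : rel T) : Prop :=
  forall x y : T, connect e x y.

Fixpoint gball (T : finType) (e : rel T) (n : nat) (x : T) : {set T} :=
  match n with
  | 0 => [set x]
  | n'.+1 => gball e n' x :|: [set y | [exists z in gball e n' x, e z y]]
  end.

(* graph distance: least n with y in the n-ball of x (searched among
   0 .. #|T|-1, which suffices in a connected graph) *)
Definition gdist (T : finType) (e : rel T) (x y : T) : nat :=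
  find (fun n => y \in gball e n x) (iota 0 #|T|).

Definition deg (T : finType) (e : rel T) (x : T) : nat := #|[set z | e x z]|.

Definition dirac (R : realType) (T : finType) (w : T) : {ffun T -> R} :=
  [ffun x => if x == w then 1 else 0].

Definition walk_step (R : realType) (T : finType) (e : rel T) (g : R)
  (p : {ffun T -> R}) : {ffun T -> R} :=
  [ffun y => g * p y + \sum_(x | e x y) p x * ((1 - g) / (deg e x)%:R)].

Definition walk_dist (R : realType) (T : finType) (e : rel T) (w : T) (g : R)
  (n : nat) : {ffun T -> R} := iter n (walk_step e g) (dirac R w).

Definition coupling (R : realType) (T : finType) (mu nu : {ffun T -> R})
  (pi : {ffun T * T -> R}) : Prop :=
  (forall xy, 0 <= pi xy) /\
  (forall x, \sum_(y : T) pi (x, y) = mu x) /\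
  (forall y, \sum_(x : T) pi (x, y) = nu y).

Definition transport_cost (R : realType) (T : finType) (e : rel T)
  (pi : {ffun T * T -> R}) : R :=
  \sum_(xy : T * T) pi xy * (gdist e xy.1 xy.2)%:R.

Definition wasserstein (R : realType) (T : finType) (e : rel T)
  (mu nu : {ffun T -> R}) : R :=
  inf [set c : R | exists pi, coupling mu nu pi /\ c = transport_cost e pi].

Definition Wn (R : realType) (T : finType) (e : rel T) (u v : T) (alpha beta : R)
  (n : nat) : R :=
  wasserstein e (walk_dist e u alpha n) (walk_dist e v beta n).

(* With beta = 1 the second walk never moves, so W_n = sum_x mu_n(x) d(x, v) is
   the moment r P^n d of the transition matrix P.  The walk is reversible
   (deg x * P(x, y) is symmetric), so P is self-adjoint for a weighted inner
   product and ker P^2 = ker P; with Cayley-Hamilton this yields P = P^2 q(P)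
   for a polynomial q, hence every P^k with k >= 1 is a combination of powers
   P^j with j >= N.  Applied to the increments W_(k+1) - W_k = r P^k (P d - d),
   vanishing for k >= N forces vanishing for all k >= 1.  If some vertex is
   isolated, connectedness makes the graph a single vertex and W_n = 0. *)

From mathcomp Require Import all_boot all_order all_algebra.
From mathcomp Require Import boolp classical_sets reals.
From mathcomp Require Import ring.
Set Implicit Arguments.
Unset Strict Implicit.
Unset Printing Implicit Defensive.

Import Order.TTheory GRing.Theory Num.Theory.
Local Open Scope ring_scope.

Lemma reversible_mx_ker_sq (R : realDomainType) n (A : 'M[R]_n) (w : 'I_n -> R) :
    (forall i, 0 < w i) -> (forall i j, w i * A i j = w j * A j i) ->
  forall Y : 'M_n, A *m (A *m Y) = 0 -> A *m Y = 0.
Proof.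
move=> w_gt0 w_rev Y AAY; set Z := A *m Y; apply/matrixP => i j; rewrite [RHS]mxE.
have energy : \sum_l w l * Z l j ^+ 2 = \sum_k w k * Y k j * (A *m Z) k j.
  transitivity (\sum_l \sum_k w k * A k l * Y k j * Z l j).
    apply: eq_bigr => l _; rewrite expr2 {2}/Z mxE !mulr_sumr.
    by apply: eq_bigr => k _; rewrite w_rev; ring.
  rewrite exchange_big; apply: eq_bigr => k _; rewrite mxE !mulr_sumr.
  by apply: eq_bigr => l _; ring.
have energy0 : \sum_l w l * Z l j ^+ 2 = 0.
  by rewrite energy AAY; apply: big1 => k _; rewrite mxE mulr0.
have term_ge0 l (_ : true) : 0 <= w l * Z l j ^+ 2 := mulr_ge0 (ltW (w_gt0 l)) (sqr_ge0 _).
have /(_ i isT)/eqP := psumr_eq0P term_ge0 energy0.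
by rewrite mulf_eq0 gt_eqF //= sqrf_eq0 => /eqP.
Qed.

Lemma exprS_absorb (R : pzSemiRingType) (a b : R) : a = a * a * b ->
  forall k t, a ^+ k.+1 = a ^+ (k.+1 + t) * b ^+ t.
Proof.
move=> aab k; elim=> [|t IHt]; first by rewrite addn0 mulr1.
by rewrite IHt addSn exprSr {2}aab addSn addnS (exprS b) !exprSr !mulrA.
Qed.

Section IndexOne.
Variables (F : fieldType) (n : nat) (A : 'M[F]_n.+1).
Hypothesis ker_sq : forall Y : 'M_n.+1, A *m (A *m Y) = 0 -> A *m Y = 0.

Lemma annihilating_poly_factor (p : {poly F}) : p != 0 -> A * horner_mx A p = 0 ->
  exists q : {poly F}, A = A * A * horner_mx A q.
Proof.
have A_comm (s : {poly F}) : horner_mx A s * A = A * horner_mx A s.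
  by rewrite -!mulmxE; apply/esym/comm_mx_horner.
elim/poly_ind: p => [|p c IHp]; first by rewrite eqxx.
have [-> | c_neq0] := eqVneq c 0.
  rewrite polyC0 addr0 rmorphM /= horner_mx_X => pX_neq0 ApA; apply: IHp.
    by apply: contraNneq pX_neq0 => ->; rewrite mul0r.
  by rewrite -mulmxE; apply: ker_sq; rewrite !mulmxE -A_comm.
rewrite rmorphD rmorphM /= horner_mx_X horner_mx_C => _ ApAc.
exists (- c^-1 *: p).
rewrite linearZ /= -scalerAr -mulrA -A_comm mulrA.
move/eqP: ApAc; rewrite mulrDr -mulmxE mul_mx_scalar mulmxE mulrA addr_eq0 => /eqP ->.
by rewrite scalerN scaleNr opprK scalerA mulVf // scale1r.
Qed.

Lemma ker_sq_factor : exists q : {poly F}, A = A * A * horner_mx A q.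
Proof.
apply: (@annihilating_poly_factor (char_poly A)).
  exact: monic_neq0 (char_poly_monic A).
by rewrite Cayley_Hamilton mulr0.
Qed.

End IndexOne.

Lemma moment_horner_eq0 (R : comNzRingType) n (A : 'M[R]_n.+1) (r : 'rV_n.+1) N
    (p : {poly R}) (y : 'cV_n.+1) :
    (forall k, (N <= k)%N -> r *m A ^+ k *m y = 0) ->
  r *m (A ^+ N * horner_mx A p) *m y = 0.
Proof.
elim/poly_ind: p y => [|p c IHp] y moments0; first by rewrite rmorph0 mulr0 mulmx0 mul0mx.
rewrite rmorphD rmorphM /= horner_mx_X horner_mx_C -!mulmxE.
rewrite mulmxDr mul_mx_scalar mulmxDr mulmxDl -scalemxAr -scalemxAl moments0 //.
rewrite scaler0 addr0 -!mulmxA (mulmxA (A ^+ N)) mulmxA mulmxE.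
apply: IHp => k le_Nk.
by rewrite mulmxA -(mulmxA r) mulmxE -exprSr moments0 // ltnW.
Qed.

Lemma moments_eventually_zero (F : fieldType) n (A : 'M[F]_n) (r : 'rV_n) (y : 'cV_n) N :
    (forall Y : 'M_n, A *m (A *m Y) = 0 -> A *m Y = 0) ->
    (forall k, (N <= k)%N -> r *m A ^+ k *m y = 0) ->
  forall k, (0 < k)%N -> r *m A ^+ k *m y = 0.
Proof.
case: n A r y => [|n] A r y ker_sq_A moments0 [|k] // _; first by rewrite thinmx0 !mul0mx.
have [q Aq] := ker_sq_factor ker_sq_A.
rewrite (exprS_absorb Aq k N) addnC exprD -mulrA.
have -> : A ^+ k.+1 * horner_mx A q ^+ N = horner_mx A ('X ^+ k.+1 * q ^+ N).
  by rewrite rmorphM !rmorphXn /= horner_mx_X.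
exact: moment_horner_eq0.
Qed.

Section LazyWalk.
Variables (R : realType) (T : finType) (e : rel T).

Definition walk_kernel (g : R) (x y : T) : R :=
  (if x == y then g else 0) + (if e x y then (1 - g) / (deg e x)%:R else 0).

Lemma walk_stepE (g : R) (p : {ffun T -> R}) y :
  walk_step e g p y = \sum_x p x * walk_kernel g x y.
Proof.
rewrite ffunE /walk_kernel; under [RHS]eq_bigr do rewrite mulrDr.
rewrite big_split /=; congr (_ + _).
  rewrite (bigD1 y) //= eqxx big1 ?addr0 1?mulrC // => x /negbTE ->.
  by rewrite mulr0.
rewrite big_mkcond; apply: eq_bigr => x _.
by case: (e x y); rewrite ?mulr0.
Qed.

Lemma walk_dist_ge0 w (g : R) n x : 0 <= g -> g <= 1 -> 0 <= walk_dist e w g n x.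
Proof.
move=> g_ge0 g_le1; elim: n x => [|n IHn] x; first by rewrite ffunE; case: ifP.
rewrite /walk_dist iterS walk_stepE; apply: sumr_ge0 => z _.
rewrite mulr_ge0 ?addr_ge0 //; do 2?case: ifP => _ //.
by rewrite divr_ge0 ?subr_ge0.
Qed.

Lemma deg_card x : deg e x = #|[set z | e x z]%SET|.
Proof. by apply: eq_card => z; rewrite inE; apply/idP/idP; rewrite in_setE. Qed.

Lemma deg_gt0 x z : e x z -> (0 < deg e x)%N.
Proof. by move=> xz; rewrite deg_card; apply/card_gt0P; exists z; rewrite inE. Qed.

Lemma walk_kernel_sum1 (g : R) x z : e x z -> \sum_y walk_kernel g x y = 1.
Proof.
move=> xz; rewrite big_split /= (bigD1 x) //= eqxx big1 ?addr0 => [|y]; last first.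
  by rewrite eq_sym => /negbTE ->.
rewrite -big_mkcond (eq_bigl (fun y => y \in [set z | e x z]%SET)); last first.
  by move=> y; rewrite inE.
rewrite sumr_const -deg_card -[_ *+ deg e x]mulr_natr divfK ?subrKC //.
by rewrite pnatr_eq0 -lt0n (deg_gt0 xz).
Qed.

Definition walk_mean (w : T) (g : R) (f : T -> R) (k : nat) : R :=
  \sum_x walk_dist e w g k x * f x.

Definition walk_mx (g : R) : 'M[R]_#|T| :=
  \matrix_(i, j) walk_kernel g (enum_val i) (enum_val j).

Lemma sum_enum_val (F : T -> R) : \sum_x F x = \sum_(i < #|T|) F (enum_val i).
Proof. by rewrite -big_enum_val; apply: eq_bigl => x; rewrite inE. Qed.

Lemma walk_dist_mx w (g : R) k :
  \row_i walk_dist e w g k (enum_val i)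
    = \row_i walk_dist e w g 0 (enum_val i) *m walk_mx g ^+ k.
Proof.
elim: k => [|k IHk]; first by rewrite mulmx1.
rewrite exprSr -mulmxE mulmxA -IHk; apply/rowP => j.
rewrite !mxE /walk_dist iterS walk_stepE sum_enum_val.
by apply: eq_bigr => i _; rewrite !mxE.
Qed.

Lemma walk_mean_mx w (g : R) f k : walk_mean w g f k =
  (\row_i walk_dist e w g 0 (enum_val i) *m walk_mx g ^+ k *m \col_i f (enum_val i)) 0 0.
Proof.
rewrite -walk_dist_mx mxE /walk_mean sum_enum_val.
by apply: eq_bigr => i _; rewrite !mxE.
Qed.

Lemma walk_dist_lazy1 (w : T) n : walk_dist e w 1 n = dirac R w.
Proof.
elim: n => [// | n IHn]; rewrite /walk_dist iterS -/(walk_dist e w 1 n) IHn.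
apply/ffunP => y; rewrite ffunE mul1r subrr big1 ?addr0 // => x _.
by rewrite mul0r mulr0.
Qed.

Hypotheses (e_sym : symmetric e) (no_isolated : forall x, exists z, e x z).

Lemma walk_dist_sum1 w (g : R) n : \sum_x walk_dist e w g n x = 1.
Proof.
elim: n => [|n IHn].
  by under eq_bigr do rewrite ffunE; rewrite -big_mkcond big_pred1_eq.
rewrite /walk_dist iterS -[RHS]IHn; under eq_bigr do rewrite walk_stepE.
rewrite exchange_big; apply: eq_bigr => x _; have [z xz] := no_isolated x.
by rewrite -mulr_sumr (walk_kernel_sum1 g xz) mulr1.
Qed.

Lemma deg_walk_kernel_sym (g : R) x y :
  (deg e x)%:R * walk_kernel g x y = (deg e y)%:R * walk_kernel g y x.
Proof.
rewrite /walk_kernel; have [-> // | _] := eqVneq x y.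
rewrite [e x y]e_sym !add0r; case: ifP => [yx | _]; last by rewrite !mulr0.
have xy : e x y by rewrite e_sym.
by rewrite (mulrC (deg e x)%:R) (mulrC (deg e y)%:R) !divfK // pnatr_eq0 -lt0n;
  [exact: deg_gt0 yx | exact: deg_gt0 xy].
Qed.

Lemma walk_mx_ker_sq (g : R) (Y : 'M_#|T|) :
  walk_mx g *m (walk_mx g *m Y) = 0 -> walk_mx g *m Y = 0.
Proof.
apply: (@reversible_mx_ker_sq _ _ _ (fun i => (deg e (enum_val i))%:R)) => [i | i j].
  by have [z xz] := no_isolated (enum_val i); rewrite ltr0n (deg_gt0 xz).
by rewrite !mxE deg_walk_kernel_sym.
Qed.

Lemma walk_mean_eventually_const w (g : R) (f : T -> R) :
    (exists N, forall k, (N <= k)%N -> walk_mean w g f k = walk_mean w g f N) ->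
  forall k, (1 <= k)%N -> walk_mean w g f k = walk_mean w g f 1.
Proof.
move=> [N meanN].
pose r : 'rV_#|T| := \row_i walk_dist e w g 0 (enum_val i); pose A := walk_mx g.
pose c : 'cV_#|T| := \col_i f (enum_val i).
have increment k :
    walk_mean w g f k.+1 - walk_mean w g f k = (r *m A ^+ k *m (A *m c - c)) 0 0.
  by rewrite !walk_mean_mx mulmxBr [RHS]mxE [X in _ = _ + X]mxE exprSr -mulmxE !mulmxA.
have increment0 : forall k, (0 < k)%N -> r *m A ^+ k *m (A *m c - c) = 0.
  apply: (moments_eventually_zero (N := N) (@walk_mx_ker_sq g)) => j le_Nj.
  rewrite [LHS]mx11_scalar -increment (meanN _ (leqW le_Nj)) (meanN _ le_Nj).
  by rewrite subrr raddf0.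
elim=> [// | [// | k] IHk] _.
by apply/eqP; rewrite -(IHk isT) -subr_eq0 increment increment0 ?mxE.
Qed.

End LazyWalk.

Section DiracTransport.
Variables (R : realType) (T : finType) (e : rel T).
Local Open Scope classical_set_scope.

Lemma transport_cost_dirac (mu : {ffun T -> R}) v pi : coupling mu (dirac R v) pi ->
  transport_cost e pi = \sum_x mu x * (gdist e x v)%:R.
Proof.
move=> [pi_ge0 [pi_mu pi_v]].
have pi_off x y : y != v -> pi (x, y) = 0.
  move=> y_neq_v; have := pi_v y; rewrite ffunE (negbTE y_neq_v).
  by move/(psumr_eq0P (fun x _ => pi_ge0 (x, y)))/(_ x isT).
transitivity (\sum_x \sum_y pi (x, y) * (gdist e x y)%:R).
  by rewrite pair_bigA; apply: eq_bigr => -[x y].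
apply: eq_bigr => x _; rewrite -pi_mu mulr_suml; apply: eq_bigr => y _.
by have [-> // | y_neq_v] := eqVneq y v; rewrite pi_off ?mul0r.
Qed.

Lemma coupling_prod (mu nu : {ffun T -> R}) :
    (forall x, 0 <= mu x) -> (forall y, 0 <= nu y) ->
    \sum_x mu x = 1 -> \sum_y nu y = 1 ->
  coupling mu nu [ffun xy => mu xy.1 * nu xy.2].
Proof.
move=> mu_ge0 nu_ge0 mu1 nu1; split=> [xy | ]; first by rewrite ffunE mulr_ge0.
split=> [x | y]; under eq_bigr do rewrite ffunE /=.
  by rewrite -mulr_sumr nu1 mulr1.
by rewrite -mulr_suml mu1 mul1r.
Qed.

Lemma dirac_ge0 (v x : T) : 0 <= dirac R v x.
Proof. by rewrite ffunE; case: ifP. Qed.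

Lemma sum_dirac (v : T) : \sum_x dirac R v x = 1.
Proof. by under eq_bigr do rewrite ffunE; rewrite -big_mkcond big_pred1_eq. Qed.

Lemma wasserstein_dirac (mu : {ffun T -> R}) v :
    (forall x, 0 <= mu x) -> \sum_x mu x = 1 ->
  wasserstein e mu (dirac R v) = \sum_x mu x * (gdist e x v)%:R.
Proof.
move=> mu_ge0 mu1; rewrite /wasserstein -[RHS]inf1; congr inf.
apply/seteqP; split=> c /=; first by move=> [pi [/transport_cost_dirac -> ->]].
move=> ->; have pi_cpl := coupling_prod mu_ge0 (@dirac_ge0 v) mu1 (sum_dirac v).
by exists [ffun xy => mu xy.1 * dirac R v xy.2]; rewrite (transport_cost_dirac pi_cpl).
Qed.

Lemma wasserstein_gdist0 (mu nu : {ffun T -> R}) :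
  (forall x y, gdist e x y = 0%N) -> wasserstein e mu nu = 0.
Proof.
move=> gdist0; rewrite /wasserstein.
have /subset_set1[-> | ->] :
    [set c | exists pi, coupling mu nu pi /\ c = transport_cost e pi] `<=` [set 0].
  by move=> c [pi [_ ->]]; rewrite /transport_cost big1 // => xy _; rewrite gdist0 mulr0.
  exact: inf0.
exact: inf1.
Qed.

End DiracTransport.

Lemma connected_isolated_single (T : finType) (e : rel T) (x : T) :
  connected_graph e -> (forall z, ~ e x z) -> forall y, y = x.
Proof.
move=> e_conn x_iso y; have [[| z p] /= path_xp -> //] := connectP (e_conn x y).
by case/andP: path_xp => /x_iso.
Qed.

Lemma gdist_single (T : finType) (e : rel T) (x : T) :
  (forall y, y = x) -> forall y z, gdist e y z = 0%N.
Proof.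
move=> single y z; rewrite (single y) (single z) /gdist.
have : (0 < #|T|)%N by apply/card_gt0P; exists x.
by case: #|T| => [| n] //= _; rewrite inE eqxx.
Qed.

Theorem lemma7p2 (R : realType) (T : finType) (e : rel T) (u v : T) (alpha beta : R) :
  simple_graph e -> connected_graph e ->
  0 <= alpha -> alpha <= beta -> beta <= 1 ->
  beta = 1 ->
  (exists N : nat, forall n : nat, (N <= n)%N -> Wn e u v alpha beta n = Wn e u v alpha beta N) ->
  forall n : nat, (1 <= n)%N -> Wn e u v alpha beta n = Wn e u v alpha beta 1.
Proof.
move=> [e_sym _] e_conn alpha_ge0 alpha_le1 _ beta1 W_const; subst beta.
have [no_isolated | /existsNP [x /forallNP x_iso]] := pselect (forall x, exists z, e x z).
  have W_mean k : Wn e u v alpha 1 k = walk_mean e u alpha (fun x => (gdist e x v)%:R) k.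
    rewrite /Wn walk_dist_lazy1 wasserstein_dirac //; last exact: walk_dist_sum1.
    by move=> x; apply: walk_dist_ge0.
  move=> n; rewrite !W_mean; apply: walk_mean_eventually_const => //.
  by have [N WN] := W_const; exists N => k le_Nk; rewrite -!W_mean WN.
have gdist0 := gdist_single e (connected_isolated_single e_conn x_iso).
by move=> n _; rewrite /Wn !wasserstein_gdist0.
Qed.
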